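(* Let $\Bbbk$ be a field with $\mathrm{char}(\Bbbk)\ne2$, $n\ge2$, $\mathbb{H}_{2^n}$ the Nichols Hopf algebra and $A$ a unital associative $\Bbbk$-algebra. Let $\cdot:\mathbb{H}_{2^n}\otimes A\to A$ be a partial action with $g\cdot1_A=0$ and $x_i\cdot1_A\in Z(A)$ for all $i\in\{1,\dots,n-1\}$. Then for all $a\in A$ and $i\in\{1,\dots,n-1\}$, $$gx_i\cdot a=x_i\cdot a=(x_i\cdot1_A)a,$$ and $gx_{i_1}x_{i_2}\cdots x_{i_s}\cdot a=x_{i_1}x_{i_2}\cdots x_{i_s}\cdot a=0$ for all $s\ge2$ and $i_1,\dots,i_s\in\{1,\dots,n-1\}$.
   Context: $\mathbb{H}_{2^n}$ is the Hopf algebra generated by $g,x_1,\dots,x_{n-1}$ with relations $g^2=1$, $x_i^2=0$, $x_ig=-gx_i$, $x_ix_j=-x_jx_i$, $g$ group-like, $\Delta(x_i)=x_i\otimes1+g\otimes x_i$, $\varepsilon(x_i)=0$. $Z(A)$ is the center of $A$. A partial action of a bialgebra $H$ on $A$ is a linear map $\cdot:H\otimes A\to A$ with $1_H\cdot a=a$, $h\cdot(ab)=(h_1\cdot a)(h_2\cdot b)$, $h\cdot(k\cdot a)=(h_1\cdot1_A)(h_2k\cdot a)$. *)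

From HB Require Import structures.
From mathcomp Require Import all_boot all_order all_algebra.
Set Implicit Arguments. Unset Strict Implicit. Unset Printing Implicit Defensive.
Import GRing.Theory.
Local Open Scope ring_scope.

(* The Nichols Hopf algebra H_{2^n}, with m = n - 1 skew-primitive generators.
   Generator x_{i+1} of the paper is indexed here by i : 'I_m.
   Basis: g^e x_{s_1} ... x_{s_k}, with e : bool and S = {s_1 < ... < s_k}. *)
Definition HB (m : nat) : finType := (bool * {set 'I_m})%type.

Section Nichols.
Variables (K : fieldType) (m : nat).

(* Product of two basis monomials, computed from the defining relations
   g^2 = 1, x_i^2 = 0, x_i g = - g x_i, x_i x_j = - x_j x_i:
   (g^e x_S)(g^f x_T) = (-1)^(f|S| + #inversions) g^(e+f) x_(S u T) if S, T disjoint,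
   and 0 otherwise. *)
Definition mulB (b c : HB m) : K * HB m :=
  let: (e, Sb) := b in let: (f, Tb) := c in
  let sgn : K := (-1) ^+ (f * #|Sb| +
        #|[set p : 'I_m * 'I_m | (p.1 \in Sb) && (p.2 \in Tb) && (p.2 < p.1)%N]|)%N in
  (if [disjoint Sb & Tb] then sgn else 0, (e (+) f, Sb :|: Tb)).

Definition coefAt (r : K * HB m) (d : HB m) : K := if r.2 == d then r.1 else 0.

Definition Hel := {ffun HB m -> K}.
Definition basisv (b : HB m) : Hel := [ffun c => (c == b)%:R].
Definition hmul (u v : Hel) : Hel :=
  [ffun d => \sum_(b : HB m) \sum_(c : HB m) u b * v c * coefAt (mulB b c) d].
Definition hone : Hel := basisv (false, set0).
Definition gH : Hel := basisv (true, set0).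
Definition xH (i : 'I_m) : Hel := basisv (false, [set i]).
Definition xprod (l : seq 'I_m) : Hel := foldr hmul hone [seq xH i | i <- l].

Definition Tel := {ffun (HB m * HB m) -> K}.
Definition tbasis (p : HB m * HB m) : Tel := [ffun q => (q == p)%:R].
Definition tmul (U V : Tel) : Tel :=
  [ffun d => \sum_(p : HB m * HB m) \sum_(q : HB m * HB m)
     U p * V q * coefAt (mulB p.1 q.1) d.1 * coefAt (mulB p.2 q.2) d.2].
Definition tadd (U V : Tel) : Tel := [ffun d => U d + V d].
Definition tone : Tel := tbasis ((false, set0), (false, set0)).
Definition DeltaG : Tel := tbasis ((true, set0), (true, set0)).
Definition DeltaX (i : 'I_m) : Tel :=
  tadd (tbasis ((false, [set i]), (false, set0))) (tbasis ((true, set0), (false, [set i]))).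
(* Delta is the algebra map extending the above; on the basis monomial
   g^e x_{s_1} ... x_{s_k} (s_1 < ... < s_k) it is Delta(g)^e Delta(x_{s_1}) ... Delta(x_{s_k}). *)
Definition Delta (b : HB m) : Tel :=
  tmul (if b.1 then DeltaG else tone) (foldr tmul tone [seq DeltaX i | i <- enum b.2]).

Variable (A : algType K).

Definition actH (act : HB m -> A -> A) (h : Hel) (a : A) : A :=
  \sum_(b : HB m) h b *: act b a.

(* Partial action of H_{2^n} on A (axioms checked on basis elements, which suffices
   by linearity in h and k):
   1 . a = a ;  h . (a a') = (h_1 . a)(h_2 . a') ;  h . (k . a) = (h_1 . 1)(h_2 k . a). *)
Definition is_partial_action (act : HB m -> A -> A) : Prop :=
  [/\ (forall b (k : K) (a a' : A), act b (k *: a + a') = k *: act b a + act b a'),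
      (forall a, act (false, set0) a = a),
      (forall b (a a' : A), act b (a * a') =
         \sum_(p : HB m * HB m) Delta b p *: (act p.1 a * act p.2 a')) &
      (forall b c (a : A), act b (act c a) =
         \sum_(p : HB m * HB m)
            Delta b p *: (act p.1 1 * actH act (hmul (basisv p.2) (basisv c)) a))].

End Nichols.

From HB Require Import structures.
From mathcomp Require Import all_boot all_order all_algebra.
Set Implicit Arguments. Unset Strict Implicit. Unset Printing Implicit Defensive.
Import GRing.Theory.
Local Open Scope ring_scope.

(* Since Delta(g) = g (x) g, multiplicativity gives g.a = (g.a)(g.1) = 0. Since
   Delta(g x_i) = g x_i (x) g + 1 (x) g x_i, multiplicativity gives
   g x_i . b = b (g x_i . 1), and the composition axiom gives
   g x_i . (g^e x_T . a) = (g x_i . 1)(g^(e+1) x_T . a) +- (g x_i g^e x_T . a).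
   For e = 1 and T empty the left side vanishes, so x_i . a = (g x_i . 1) a; hence
   g x_i . 1 = x_i . 1 and, by centrality, g x_i . a = x_i . a = (x_i . 1) a.
   For S = {i} u T with T nonempty, once g^e x_T . a does not depend on e (the
   previous case, or induction on |T|), the first term on the right equals the left
   side, and the nonzero sign forces g^e x_S . a = 0. *)

Lemma sum_eq_if (T : finType) (V : zmodType) (x : T) (F : T -> V) :
  \sum_(y : T) (if x == y then F y else 0) = F x.
Proof.
rewrite (bigD1 x) //= eqxx big1 ?addr0 // => y /negbTE nxy.
by rewrite eq_sym nxy.
Qed.

Section NicholsBasis.
Variables (K : fieldType) (m : nat).
Implicit Types (i : 'I_m) (e f : bool) (S T : {set 'I_m}).

Lemma mulB_set0l e f T : mulB K (e, set0) (f, T) = (1, (e (+) f, T)).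
Proof.
rewrite /mulB set0U.
have -> : [set p : 'I_m * 'I_m | (p.1 \in set0) && (p.2 \in T) && (p.2 < p.1)%N] = set0.
  by apply/setP => p; rewrite !inE.
by rewrite !cards0 muln0 expr0 -setI_eq0 set0I eqxx.
Qed.

Lemma mulB_set0r e S : mulB K (e, S) (false, set0) = (1, (e, S)).
Proof.
rewrite /mulB setU0 addbF.
have -> : [set p : 'I_m * 'I_m | (p.1 \in S) && (p.2 \in set0) && (p.2 < p.1)%N] = set0.
  by apply/setP => p; rewrite !inE andbF.
by rewrite !cards0 mul0n expr0 -setI_eq0 setI0 eqxx.
Qed.

Lemma mulB_snd e f S T : (mulB K (e, S) (f, T)).2 = (e (+) f, S :|: T).
Proof. by []. Qed.

Lemma mulB_fst_neq0 e f S T : ((mulB K (e, S) (f, T)).1 != 0) = [disjoint S & T].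
Proof.
by rewrite /mulB; case: ifP => _ /=; rewrite ?eqxx // expf_eq0 oppr_eq0 oner_eq0 andbF.
Qed.

Lemma mulB_gx_g i : (mulB K (true, [set i]) (true, set0)).1 = -1.
Proof.
rewrite /mulB /=.
have -> : [set p : 'I_m * 'I_m | (p.1 \in [set i]) && (p.2 \in set0) && (p.2 < p.1)%N] = set0.
  by apply/setP => p; rewrite !inE andbF.
by rewrite cards0 cards1 -setI_eq0 setI0 eqxx expr1.
Qed.

(* [hvec (c, b)] is the multiple c b of the basis monomial b, in the (coefficient,
   monomial) format returned by [mulB]; [tvec] is its analogue on the tensor square. *)
Definition hvec (r : K * HB m) : Hel K m := [ffun d => coefAt r d].

Lemma basisv_hvec b : basisv K b = hvec (1, b).
Proof. by apply/ffunP => d; rewrite !ffunE /coefAt /= eq_sym; case: eqP. Qed.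

Lemma hmul_hvec r s :
  hmul (hvec r) (hvec s) = hvec (r.1 * s.1 * (mulB K r.2 s.2).1, (mulB K r.2 s.2).2).
Proof.
apply/ffunP => d; rewrite !ffunE.
under eq_bigr => b _.
  rewrite (_ : \sum_c _ = if r.2 == b then
      \sum_c r.1 * hvec s c * coefAt (mulB K b c) d else 0); last first.
    rewrite ffunE /coefAt; case: (r.2 =P b) => [<-|_]; first by apply: eq_bigr => c _; rewrite ffunE.
    by rewrite big1 // => c _; rewrite !mul0r.
  over.
rewrite sum_eq_if.
under eq_bigr => c _.
  rewrite (_ : _ * _ = if s.2 == c then r.1 * s.1 * coefAt (mulB K r.2 c) d else 0); last first.
    by rewrite ffunE /coefAt; case: eqP => // _; rewrite mulr0 mul0r.
  over.
by rewrite sum_eq_if /coefAt /=; case: eqP; rewrite ?mulr0.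
Qed.

Lemma hmul_g_hvec k e S : hmul (gH K m) (hvec (k, (e, S))) = hvec (k, (~~ e, S)).
Proof. by rewrite /gH basisv_hvec hmul_hvec mulB_set0l mul1r mulr1. Qed.

Lemma xprod_hvec (l : seq 'I_m) :
  exists k S, xprod K l = hvec (k, (false, S)) /\ (k != 0 -> #|S| = size l).
Proof.
elim: l => [|i l [k [S [Ek hS]]]].
  by exists 1, set0; rewrite /xprod /hone basisv_hvec cards0.
exists (k * (mulB K (false, [set i]) (false, S)).1), (i |: S).
have -> : xprod K (i :: l) = hmul (xH K i) (xprod K l) by [].
rewrite Ek /xH basisv_hvec hmul_hvec mulB_snd mul1r.
split=> //; rewrite mulf_eq0 negb_or => /andP[/hS S_size].
by rewrite mulB_fst_neq0 disjoints1 cardsU1 S_size => ->.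
Qed.

Definition tvec (r : K * (HB m * HB m)) : Tel K m :=
  [ffun d => if r.2 == d then r.1 else 0].

Lemma tbasis_tvec p : tbasis K p = tvec (1, p).
Proof. by apply/ffunP => d; rewrite !ffunE /= eq_sym; case: eqP. Qed.

Lemma tmul_tvec k l p q :
  tmul (tvec (k, p)) (tvec (l, q)) =
  tvec (k * l * (mulB K p.1 q.1).1 * (mulB K p.2 q.2).1,
        ((mulB K p.1 q.1).2, (mulB K p.2 q.2).2)).
Proof.
apply/ffunP => d; rewrite !ffunE.
under eq_bigr => p' _.
  rewrite (_ : \sum_q' _ = if p == p' then
      \sum_q' k * tvec (l, q) q' * coefAt (mulB K p'.1 q'.1) d.1
                * coefAt (mulB K p'.2 q'.2) d.2 else 0); last first.
    rewrite ffunE /=; case: (p =P p') => [<-|_] //.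
    by rewrite big1 // => c _; rewrite !mul0r.
  over.
rewrite sum_eq_if (bigD1 q) //= big1 ?addr0; last first.
  by move=> q' /negbTE nq; rewrite ffunE /= eq_sym nq mulr0 !mul0r.
rewrite ffunE /= eqxx /coefAt; case: d => d1 d2 /=; rewrite xpair_eqE.
by case: eqP; case: eqP; rewrite /= ?mulr0 ?mul0r ?mulrA.
Qed.

Lemma tmul_addl (U V W : Tel K m) : tmul (tadd U V) W = tadd (tmul U W) (tmul V W).
Proof.
apply/ffunP => d; rewrite !ffunE -big_split; apply: eq_bigr => p _.
by rewrite -big_split; apply: eq_bigr => q _; rewrite ffunE !mulrDl.
Qed.

Lemma tmul_addr (U V W : Tel K m) : tmul U (tadd V W) = tadd (tmul U V) (tmul U W).
Proof.
apply/ffunP => d; rewrite !ffunE -big_split; apply: eq_bigr => p _.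
by rewrite -big_split; apply: eq_bigr => q _; rewrite ffunE mulrDr !mulrDl.
Qed.

Lemma Delta_g : Delta K (true, set0 : {set 'I_m}) = tvec (1, ((true, set0), (true, set0))).
Proof.
by rewrite /Delta /= enum_set0 /tone /DeltaG !tbasis_tvec tmul_tvec !mulB_set0r !mulr1.
Qed.

Lemma Delta_gx i :
  Delta K (true, [set i]) =
  tadd (tvec (1, ((true, [set i]), (true, set0))))
       (tvec (1, ((false, set0), (true, [set i])))).
Proof.
rewrite /Delta /= enum_set1 /= /DeltaX /DeltaG /tone !tbasis_tvec.
by rewrite tmul_addl !tmul_tvec !mulB_set0r tmul_addr !tmul_tvec !mulB_set0l !mulr1.
Qed.

Lemma sum_tvec (V : lmodType K) r (F : HB m * HB m -> V) :
  \sum_p tvec r p *: F p = r.1 *: F r.2.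
Proof.
rewrite (bigD1 r.2) //= ffunE eqxx big1 ?addr0 // => p /negbTE np.
by rewrite ffunE eq_sym np scale0r.
Qed.

Lemma sum_tadd (V : lmodType K) (U W : Tel K m) (F : HB m * HB m -> V) :
  \sum_p tadd U W p *: F p = \sum_p U p *: F p + \sum_p W p *: F p.
Proof. by rewrite -big_split; apply: eq_bigr => p _; rewrite ffunE scalerDl. Qed.

Lemma actH_hvec (A : algType K) (act : HB m -> A -> A) r a :
  actH act (hvec r) a = r.1 *: act r.2 a.
Proof.
rewrite /actH -(sum_eq_if r.2 (fun b => r.1 *: act b a)); apply: eq_bigr => b _.
by rewrite ffunE /coefAt; case: eqP => // _; rewrite scale0r.
Qed.

Section PartialAction.
Variables (A : algType K) (act : HB m -> A -> A).
Hypothesis act_partial : is_partial_action act.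
Hypothesis act_g1 : act (true, set0) 1 = 0.
Hypothesis act_x1_central : forall i (a : A),
  act (false, [set i]) 1 * a = a * act (false, [set i]) 1.

Lemma act0 b : act b 0 = 0.
Proof.
case: act_partial => act_lin _ _ _; move/eqP: (act_lin b 1 0 0).
by rewrite !scale1r addr0 eq_sym -subr_eq0 addrK => /eqP.
Qed.

Lemma act_g a : act (true, set0) a = 0.
Proof.
case: act_partial => _ _ act_mul _; have := act_mul (true, set0) a 1.
by rewrite mulr1 Delta_g sum_tvec act_g1 mulr0 scaler0.
Qed.

Lemma act_gx_mulr i b : act (true, [set i]) b = b * act (true, [set i]) 1.
Proof.
case: act_partial => _ act_1 act_mul _; have := act_mul (true, [set i]) b 1.
by rewrite mulr1 Delta_gx sum_tadd !sum_tvec act_g1 act_1 mulr0 !scale1r add0r.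
Qed.

Lemma act_gx_comp i e T a :
  act (true, [set i]) (act (e, T) a) =
  act (true, [set i]) 1 * act (~~ e, T) a +
  (mulB K (true, [set i]) (e, T)).1 *: act (~~ e, i |: T) a.
Proof.
case: act_partial => _ act_1 _ act_comp.
rewrite act_comp Delta_gx sum_tadd !sum_tvec /= !basisv_hvec !hmul_hvec.
by rewrite !actH_hvec mulB_set0l mulB_snd act_1 !mul1r !scale1r.
Qed.

Lemma act_x_by_gx1 i a : act (false, [set i]) a = act (true, [set i]) 1 * a.
Proof.
have := act_gx_comp i true set0 a.
case: act_partial => _ act_1 _ _.
rewrite act_g act0 mulB_gx_g setU0 scaleN1r act_1 => /eqP.
by rewrite eq_sym subr_eq0 => /eqP.
Qed.

Lemma act_gx1 i : act (true, [set i]) 1 = act (false, [set i]) 1.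
Proof. by rewrite act_x_by_gx1 mulr1. Qed.

Lemma act_x i a : act (false, [set i]) a = act (false, [set i]) 1 * a.
Proof. by rewrite act_x_by_gx1 act_gx1. Qed.

Lemma act_gx i a : act (true, [set i]) a = act (false, [set i]) a.
Proof. by rewrite act_gx_mulr act_gx1 -act_x1_central -act_x. Qed.

Lemma act_eq0_of_g_invariant i T e a :
  i \notin T -> (forall b, act (true, T) b = act (false, T) b) ->
  act (e, i |: T) a = 0.
Proof.
move=> iNT g_inv; have := act_gx_comp i (~~ e) T a.
have -> : act (~~ e, T) a = act (e, T) a by case: e; rewrite /= g_inv.
have coef_neq0 : (mulB K (true, [set i]) (~~ e, T)).1 != 0.
  by rewrite mulB_fst_neq0 disjoints1.
rewrite negbK act_gx act_x -act_gx1 => /esym/eqP.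
by rewrite -subr_eq0 addrAC subrr add0r scaler_eq0 (negPf coef_neq0) => /eqP.
Qed.

Lemma act_eq0 S e a : (1 < #|S|)%N -> act (e, S) a = 0.
Proof.
have [N] := ubnP #|S|; elim: N S e a => [|N IH] S e a; first by rewrite ltn0.
move=> S_lt S_gt1; have [i iS] : exists i, i \in S.
  by apply/set0Pn; rewrite -card_gt0 ltnW.
have S_card : #|S| = #|S :\ i|.+1 by rewrite (cardsD1 i) iS.
have T_inv b : act (true, S :\ i) b = act (false, S :\ i) b.
  have [T_gt1 | T_le1] := ltnP 1 #|S :\ i|.
    by rewrite !IH // -ltnS -S_card.
  have /cards1P[j ->] : #|S :\ i| == 1 by rewrite eqn_leq T_le1 -ltnS -S_card.
  exact: act_gx.
by have := act_eq0_of_g_invariant e a (negbT (setD11 i S)) T_inv; rewrite setD1K.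
Qed.

End PartialAction.
End NicholsBasis.

Theorem proposition4p3 (K : fieldType) (n : nat) (A : algType K)
    (act : HB n.-1 -> A -> A) :
  (2%:R : K) != 0 ->
  (2 <= n)%N ->
  is_partial_action act ->
  act (true, set0) 1 = 0 ->
  (forall (i : 'I_n.-1) (a : A), act (false, [set i]) 1 * a = a * act (false, [set i]) 1) ->
  (forall (i : 'I_n.-1) (a : A),
      actH act (hmul (gH K n.-1) (xH K i)) a = actH act (xH K i) a /\
      actH act (xH K i) a = act (false, [set i]) 1 * a) /\
  (forall (l : seq 'I_n.-1) (a : A), (2 <= size l)%N ->
      actH act (hmul (gH K n.-1) (xprod K l)) a = actH act (xprod K l) a /\
      actH act (xprod K l) a = 0).
Proof.
move=> _ _ act_partial act_g1 act_x1_central; split.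
  move=> i a; rewrite /xH basisv_hvec hmul_g_hvec !actH_hvec !scale1r /=.
  by split; [exact: act_gx | exact: act_x].
move=> l a l_ge2; have [k [S [-> S_card]]] := xprod_hvec K l.
rewrite hmul_g_hvec !actH_hvec /=.
have [->|k_neq0] := eqVneq k 0; first by rewrite !scale0r.
have S_gt1 : (1 < #|S|)%N by rewrite S_card.
by rewrite !(act_eq0 act_partial act_g1 act_x1_central _ _ S_gt1) scaler0.
Qed.
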